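(* Let $A$ be a ring in which $2$ is a unit, and let $N_1,\dots,N_s$ be pairwise non-isomorphic $A$-modules with local endomorphism rings. The homomorphism $\Delta\colon\mathrm{Aut}_A(N_1)\times\cdots\times\mathrm{Aut}_A(N_s)\to\mathrm{Aut}_A(N_1\oplus\cdots\oplus N_s)$, $\Delta(\varphi_1,\dots,\varphi_s)=d_1(\varphi_1)\cdots d_s(\varphi_s)$, induces a surjective homomorphism $$\Delta_{\mathrm{ab}}\colon\mathrm{Aut}_A(N_1)_{\mathrm{ab}}\oplus\cdots\oplus\mathrm{Aut}_A(N_s)_{\mathrm{ab}}\to\mathrm{Aut}_A(N_1\oplus\cdots\oplus N_s)_{\mathrm{ab}}.$$
   Context: $G_{\mathrm{ab}}=G/[G,G]$. $d_i(\varphi)$ denotes the diagonal automorphism of $N_1\oplus\cdots\oplus N_s$ with diagonal entries $1_{N_1},\dots,1_{N_{i-1}},\varphi,1_{N_{i+1}},\dots,1_{N_s}$ and zero off-diagonal entries. *)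

From HB Require Import structures.
From mathcomp Require Import all_boot all_order all_algebra.
Set Implicit Arguments. Unset Strict Implicit. Unset Printing Implicit Defensive.
Import GRing.Theory.
Local Open Scope ring_scope.

Definition is_linear (A : pzRingType) (M N : lmodType A) (f : M -> N) : Prop :=
  forall (a : A) (x y : M), f (a *: x + y) = a *: f x + f y.

Definition is_aut (A : pzRingType) (M : lmodType A) (f : M -> M) : Prop :=
  is_linear f /\ bijective f.

Definition iso_mod (A : pzRingType) (M N : lmodType A) : Prop :=
  exists f : M -> N, is_linear f /\ bijective f.

(* End_A(M) is a local ring: End_A(M) is a nonzero ring (1 <> 0) and
   the non-invertible elements of End_A(M) form a two-sided ideal. *)
Definition local_End (A : pzRingType) (M : lmodType A) : Prop :=
  ~ (forall x : M, x = 0)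
  /\ (forall f g : M -> M, is_linear f -> is_linear g ->
        ~ is_aut f -> ~ is_aut g -> ~ is_aut (fun x => f x + g x))
  /\ (forall f g : M -> M, is_linear f -> is_linear g ->
        ~ is_aut f -> ~ is_aut (f \o g) /\ ~ is_aut (g \o f)).

(* underlying set of the (finite) direct sum, with pointwise operations *)
Definition dsum (A : pzRingType) (s : nat) (N : 'I_s -> lmodType A) : Type :=
  forall i : 'I_s, N i.

Definition is_linear_ds (A : pzRingType) (s : nat) (N : 'I_s -> lmodType A)
  (g : dsum N -> dsum N) : Prop :=
  forall (a : A) (x y : dsum N) (j : 'I_s),
    g (fun i => a *: x i + y i) j = a *: g x j + g y j.

Definition is_aut_ds (A : pzRingType) (s : nat) (N : 'I_s -> lmodType A)
  (g : dsum N -> dsum N) : Prop :=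
  is_linear_ds g /\ bijective g.

Definition diag_at (A : pzRingType) (s : nat) (N : 'I_s -> lmodType A)
  (i : 'I_s) (phi : N i -> N i) : dsum N -> dsum N :=
  fun x => dfwith x (phi (x i)).

Definition Delta (A : pzRingType) (s : nat) (N : 'I_s -> lmodType A)
  (phi : forall i : 'I_s, N i -> N i) : dsum N -> dsum N :=
  foldr (fun i g => diag_at (phi i) \o g) id (enum 'I_s).

(* The commutator subgroup [G,G] of G = Aut_A(N_1 (+) ... (+) N_s): the
   subgroup generated by the commutators a^-1 b^-1 a b, a, b in G. *)
Inductive in_derived (A : pzRingType) (s : nat) (N : 'I_s -> lmodType A) :
    (dsum N -> dsum N) -> Prop :=
| der_id : in_derived (@id (dsum N))
| der_step (h a a' b b' : dsum N -> dsum N) :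
    in_derived h -> is_aut_ds a -> is_aut_ds b ->
    cancel a a' -> cancel a' a -> cancel b b' -> cancel b' b ->
    in_derived (h \o (a' \o b' \o a \o b)).

From HB Require Import structures.
From mathcomp Require Import all_boot all_order all_algebra.
From Stdlib Require Import FunctionalExtensionality Classical.
Import GRing.Theory.
Local Open Scope ring_scope.
Set Implicit Arguments. Unset Strict Implicit.

(* Surjectivity of Delta_ab, by Gaussian elimination on the "matrix" of an
   automorphism g of N_1 (+) ... (+) N_s, whose (j, m) entry is the map
   g_jm : N_m -> N_j.
   - In a local endomorphism ring the non-units form an ideal, and a map
     N_j -> N_j factoring through a non-isomorphic module with local
     endomorphism ring is never invertible.  Expanding (g g^-1)_jj = 1 as
     sum_m g_jm (g^-1)_mj therefore forces every diagonal entry g_jj to be an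
     automorphism.
   - A transvection x |-> x + beta(x_k) (beta with values off N_k) is the
     commutator of the scaling of N_k by 2 with the transvection of -beta; as
     2 is a unit it lies in [G, G].
   - Composing g on the left with the transvection by -g_jk (g_kk)^-1 kills
     the off-diagonal entries of column k and keeps earlier cleared columns.
     After s steps g = h o g' with h in [G, G] and g' diagonal, i.e.
     g' = Delta(g'_11, ..., g'_ss), each g'_jj being an automorphism. *)

Section LinearMaps.
Variables (A : pzRingType) (M P Q : lmodType A).

Lemma lin0 (f : M -> P) : is_linear f -> f 0 = 0.
Proof.
move=> hf; have h := hf 1 0 0; rewrite !scale1r addr0 in h.
by apply: (addrI (f 0)); rewrite addr0 -h.
Qed.

Lemma linZ (f : M -> P) a x : is_linear f -> f (a *: x) = a *: f x.
Proof. by move=> hf; rewrite -[a *: x]addr0 hf (lin0 hf) addr0. Qed.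

Lemma lin_comp (f : P -> Q) (g : M -> P) :
  is_linear f -> is_linear g -> is_linear (f \o g).
Proof. by move=> hf hg a x y /=; rewrite hg hf. Qed.

Lemma lin_inv (f : M -> P) (f' : P -> M) :
  is_linear f -> cancel f f' -> cancel f' f -> is_linear f'.
Proof. by move=> hf c1 c2 a x y; apply: (can_inj c1); rewrite hf !c2. Qed.

Lemma lin_sum (I : Type) (l : seq I) (F : I -> M -> P) :
  (forall i, is_linear (F i)) -> is_linear (fun x => \sum_(i <- l) F i x).
Proof.
move=> hF; elim: l => [|i l IH] a x y; first by rewrite !big_nil scaler0 addr0.
by rewrite !big_cons hF IH scalerDr addrACA.
Qed.

Lemma id_aut : is_aut (@id M).
Proof. by split; [| exists id]. Qed.

End LinearMaps.

Section LocalEndomorphismRings.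
Variables (A : pzRingType) (M P : lmodType A).
Hypotheses (locM : local_End M) (locP : local_End P).

Lemma zero_not_aut : ~ is_aut (fun _ : M => 0).
Proof. by case: locM => nt _ [_ [f' _ c2]]; apply: nt => x; rewrite -(c2 x). Qed.

Lemma sum_not_aut (I : eqType) (l : seq I) (F : I -> M -> M) :
  (forall i, is_linear (F i)) -> (forall i, i \in l -> ~ is_aut (F i)) ->
  ~ is_aut (fun x => \sum_(i <- l) F i x).
Proof.
move=> hF; elim: l => [|i l IH] hn.
  under [fun x => _]functional_extensionality do rewrite big_nil.
  exact: zero_not_aut.
under [fun x => _]functional_extensionality do rewrite big_cons.
case: locM => _ [addP _]; apply: addP => //; first exact: lin_sum.
  by apply: hn; rewrite mem_head.
by apply: IH => j jl; apply: hn; rewrite in_cons jl orbT.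
Qed.

(* Otherwise e := be o (al o be)^-1 o al is not invertible (else
   be would be an isomorphism), so locality of End(P) makes 1 - e invertible;
   but (1 - e) o be = 0, hence be = 0 and al o be = 0 on the nonzero M. *)
Lemma factor_through_noniso_not_aut (al : P -> M) (be : M -> P) :
  ~ iso_mod M P -> is_linear al -> is_linear be -> ~ is_aut (al \o be).
Proof.
move=> niso hal hbe [hab [ga c1 c2]].
have hga : is_linear ga by exact: lin_inv hab c1 c2.
pose e := be \o (ga \o al).
have he : is_linear e by do 2 apply: lin_comp.
have e_not_aut : ~ is_aut e.
  move=> [_ [e' d1 d2]]; apply: niso; exists be; split => //.
  have binj : injective be by move=> x y h; rewrite -(c1 x) -(c1 y) /= h.
  exists (ga \o al \o e') => w; last exact: d2.
  by apply: binj; have := d2 (be w).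
have [_ [d' d1 _]] : is_aut (fun x => x - e x).
  apply: NNPP => nd; case: locP => _ [addP _].
  apply: (addP e (fun x => x - e x)) => //.
    by move=> a x y; rewrite he scalerBr addrACA opprD.
  under [fun x => _]functional_extensionality do rewrite addrC subrK.
  exact: id_aut.
have be0 w : be w = 0.
  rewrite -(d1 (be w)) -[RHS](d1 0) (lin0 he) subr0; congr d'.
  by rewrite /e /= c1 subrr.
case: locM => nt _; apply: nt => y; rewrite -(c2 y) /= be0; exact: lin0.
Qed.

End LocalEndomorphismRings.

Section DirectSum.
Variables (A : pzRingType) (s : nat) (N : 'I_s -> lmodType A).

Definition dzero : dsum N := fun i => 0.

Definition dinj (k : 'I_s) (v : N k) : dsum N := dfwith dzero v.

Definition entry (g : dsum N -> dsum N) (j m : 'I_s) : N m -> N j :=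
  fun v => g (dinj v) j.
Arguments entry g j m : clear implicits.

Lemma dinj_in k (v : N k) : dinj v k = v.
Proof. exact: dfwith_in. Qed.

Lemma dinj_out k (v : N k) j : k != j -> dinj v j = 0.
Proof. by move=> h; rewrite /dinj dfwith_out. Qed.

Lemma dinj_lin k a (v w : N k) :
  dinj (a *: v + w) = (fun i => a *: dinj v i + dinj w i).
Proof.
apply: functional_extensionality_dep => i.
case: (eqVneq k i) => [<-|ne]; first by rewrite !dinj_in.
by rewrite !dinj_out // scaler0 addr0.
Qed.

Lemma lds0 (g : dsum N -> dsum N) j : is_linear_ds g -> g dzero j = 0.
Proof.
move=> hg; have := hg 1 dzero dzero j.
have -> : (fun i => 1 *: dzero i + dzero i) = dzero.
  by apply: functional_extensionality_dep => i; rewrite /dzero scale1r addr0.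
rewrite scale1r => h.
by apply: (addrI (g dzero j)); rewrite addr0 -h.
Qed.

Lemma ldsD (g : dsum N -> dsum N) x y j :
  is_linear_ds g -> g (fun i => x i + y i) j = g x j + g y j.
Proof.
move=> hg; rewrite -[g x j]scale1r -hg; congr (g _ j).
by apply: functional_extensionality_dep => i; rewrite scale1r.
Qed.

Lemma lds_comp (f g : dsum N -> dsum N) :
  is_linear_ds f -> is_linear_ds g -> is_linear_ds (f \o g).
Proof.
move=> hf hg a x y j /=; rewrite -hf; congr (f _ j).
by apply: functional_extensionality_dep => i; rewrite hg.
Qed.

Lemma lds_inv (g h : dsum N -> dsum N) :
  is_linear_ds g -> cancel g h -> cancel h g -> is_linear_ds h.
Proof.
move=> hg c1 c2 a x y j.
suff -> : h (fun i => a *: x i + y i) = (fun i => a *: h x i + h y i) by [].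
apply: (can_inj c1); rewrite c2; apply: functional_extensionality_dep => i.
by rewrite hg !c2.
Qed.

Lemma aut_ds_comp (f g : dsum N -> dsum N) :
  is_aut_ds f -> is_aut_ds g -> is_aut_ds (f \o g).
Proof. by move=> [lf bf] [lg bg]; split; [exact: lds_comp | exact: bij_comp]. Qed.

Lemma entry_lin g j m : is_linear_ds g -> is_linear (entry g j m).
Proof. by move=> hg a v w; rewrite /entry dinj_lin hg. Qed.

Definition restrict (l : seq 'I_s) (x : dsum N) : dsum N :=
  fun i => if i \in l then x i else 0.

Lemma restrict_expansion (g : dsum N -> dsum N) l x j :
  is_linear_ds g -> uniq l -> g (restrict l x) j = \sum_(m <- l) entry g j m (x m).
Proof.
move=> hg; elim: l => [_|m l IH /andP [ml ul]].
  by rewrite big_nil -(lds0 j hg).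
rewrite big_cons -IH // -ldsD //; congr (g _ j).
apply: functional_extensionality_dep => i; rewrite /restrict in_cons.
case: (eqVneq m i) => [<-|ne]; first by rewrite dinj_in (negbTE ml) addr0.
by rewrite dinj_out // add0r.
Qed.

Lemma entry_expansion (g : dsum N -> dsum N) x j :
  is_linear_ds g -> g x j = \sum_m entry g j m (x m).
Proof.
move=> hg; rewrite -restrict_expansion ?index_enum_uniq //; congr (g _ j).
by apply: functional_extensionality_dep => i; rewrite /restrict mem_index_enum.
Qed.

Lemma Delta_eq (phi : forall i : 'I_s, N i -> N i) x :
  Delta phi x = fun j => phi j (x j).
Proof.
have gen (l : seq 'I_s) : uniq l -> forall j,
    foldr (fun i g => diag_at (phi i) \o g) id l x j =
    if j \in l then phi j (x j) else x j.
  elim: l => [|i l IH] //= /andP [il ul] j; rewrite /diag_at /= in_cons.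
  case: (eqVneq i j) => [<-|ne]; first by rewrite dfwith_in IH // (negbTE il).
  by rewrite dfwith_out // IH // eq_sym (negbTE ne).
by apply: functional_extensionality_dep => j; rewrite /Delta gen ?enum_uniq ?mem_enum.
Qed.

Hypotheses (hloc : forall i : 'I_s, local_End (N i))
  (hnoniso : forall i j : 'I_s, i != j -> ~ iso_mod (N i) (N j)).

(* The diagonal entries of an automorphism are automorphisms: otherwise
   1 = (g g^-1)_jj = sum_m g_jm (g^-1)_mj would be a sum of non-units of
   the local ring End(N_j). *)
Lemma diag_entry_aut (g : dsum N -> dsum N) j : is_aut_ds g -> is_aut (entry g j j).
Proof.
case=> hgl [h c1 c2]; have hhl := lds_inv hgl c1 c2.
apply: NNPP => nd.
pose F m := entry g j m \o entry h m j.
have hF m : is_linear (F m) by apply: lin_comp; apply: entry_lin.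
have sumF : (fun v => \sum_m F m v) = id.
  apply: functional_extensionality => v.
  by rewrite -[RHS](dinj_in v) -[in RHS](c2 (dinj v)) (entry_expansion _ _ hgl).
apply: (sum_not_aut (hloc j) hF (l := index_enum 'I_s));
  last by rewrite sumF; exact: id_aut.
move=> m _; case: (eqVneq j m) => [<-|ne].
  case: (hloc j) => _ [_ mulP].
  by case: (mulP _ (entry h j j) (@entry_lin g j j hgl) (@entry_lin h j j hhl) nd).
have niso := hnoniso ne.
by apply: (factor_through_noniso_not_aut (hloc j) (hloc m) niso); apply: entry_lin.
Qed.

Definition transvection (k : 'I_s) (be : forall j, N k -> N j) : dsum N -> dsum N :=
  fun x j => x j + be j (x k).

Definition transvector (k : 'I_s) (be : forall j, N k -> N j) : Prop :=
  (forall j, is_linear (be j)) /\ (forall v, be k v = 0).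

Definition negcol (k : 'I_s) (be : forall j, N k -> N j) : forall j, N k -> N j :=
  fun j v => - be j v.

Lemma negcol_transvector k (be : forall j, N k -> N j) :
  transvector be -> transvector (negcol be).
Proof.
case=> hl h0; split=> [j a v w|v]; last by rewrite /negcol h0 oppr0.
by rewrite /negcol hl opprD scalerN.
Qed.

Lemma transvectionK k (be : forall j, N k -> N j) :
  transvector be -> cancel (transvection be) (transvection (negcol be)).
Proof.
case=> _ h0 x; apply: functional_extensionality_dep => j.
by rewrite /transvection /negcol h0 addr0 addrK.
Qed.

Lemma transvectionNK k (be : forall j, N k -> N j) :
  transvector be -> cancel (transvection (negcol be)) (transvection be).
Proof.
case=> _ h0 x; apply: functional_extensionality_dep => j.
by rewrite /transvection /negcol h0 oppr0 addr0 subrK.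
Qed.

Lemma transvection_aut k (be : forall j, N k -> N j) :
  transvector be -> is_aut_ds (transvection be).
Proof.
move=> tb; split; last by exists (transvection (negcol be));
  [apply: transvectionK | apply: transvectionNK].
by case: tb => hl _ a x y j; rewrite /transvection hl scalerDr addrACA.
Qed.

Definition scale_at (k : 'I_s) (c : A) : dsum N -> dsum N :=
  fun x j => (if j == k then c else 1) *: x j.

Lemma scale_at_lin k (c : A) :
  (forall a, GRing.comm c a) -> is_linear_ds (scale_at k c).
Proof.
move=> hc a x y j; rewrite /scale_at scalerDr !scalerA; congr (_ *: _ + _).
by case: (j == k); rewrite ?hc // mul1r mulr1.
Qed.

Lemma scale_atK k (c c' : A) : c' * c = 1 -> cancel (scale_at k c) (scale_at k c').
Proof.
move=> h x; apply: functional_extensionality_dep => j.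
by rewrite /scale_at scalerA; case: (j == k); rewrite ?h ?mulr1 scale1r.
Qed.

Definition columns_cleared (g : dsum N -> dsum N) (n : nat) : Prop :=
  forall m : 'I_s, (m < n)%N -> forall j, j != m -> forall v : N m, entry g j m v = 0.

Lemma cleared_is_Delta (g : dsum N -> dsum N) x :
  is_linear_ds g -> columns_cleared g s -> g x = Delta (fun j => entry g j j) x.
Proof.
move=> hgl hc; rewrite Delta_eq; apply: functional_extensionality_dep => j.
rewrite (entry_expansion _ _ hgl) (bigD1 j) //= big1 ?addr0 // => m mj.
by apply: hc; [exact: ltn_ord | rewrite eq_sym].
Qed.

(* One elimination step: the transvection by -g_jk (g_kk)^-1 clears
   column k of g without disturbing the columns already cleared. *)
Lemma clear_column (g : dsum N -> dsum N) (k : 'I_s) :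
  is_aut_ds g -> columns_cleared g k ->
  exists be : forall j, N k -> N j,
    transvector be /\ columns_cleared (transvection be \o g) k.+1.
Proof.
move=> ga hc; have [gkl [ginv c1 c2]] := diag_entry_aut k ga.
have hgl : is_linear_ds g by case: ga.
pose be j (v : N k) := if j == k then 0 else - entry g j k (ginv v).
have be_lin j : is_linear (be j).
  move=> a v w; rewrite /be; case: (j == k); first by rewrite scaler0 addr0.
  by rewrite (lin_inv gkl c1 c2) (@entry_lin g j k hgl) scalerN opprD.
exists be; split; first by split=> // v; rewrite /be eqxx.
move=> m; rewrite ltnS leq_eqVlt => /orP [/eqP/val_inj mk|mk] j jm v.
  subst m; rewrite /entry /transvection /= /be (negbTE jm).
  by have := c1 v; rewrite /entry => ->; rewrite subrr.
have km : k != m by rewrite -(inj_eq val_inj) /= neq_ltn mk orbT.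
have := hc m mk j jm v; have := hc m mk k km v.
by rewrite /entry /transvection /= => -> ->; rewrite (lin0 (be_lin j)) addr0.
Qed.

End DirectSum.
Arguments entry {A s N} g j m.

Section Commutators.
Variables (A : unitRingType) (s : nat) (N : 'I_s -> lmodType A).
Hypothesis h2 : (2%:R : A) \is a GRing.unit.

(* A transvection is a commutator: t_be = d^-1 o t_be o d o t_(-be), where
   d doubles the k-th coordinate; on coordinate j <> k the right-hand side
   adds -be_j(x_k) + be_j(2 x_k) = be_j(x_k). *)
Lemma transvection_commutator (k : 'I_s) (be : forall j, N k -> N j) x :
  transvector be ->
  transvection be x = (scale_at k 2%:R^-1 \o transvection be \o
                       scale_at k 2%:R \o transvection (negcol be)) x.
Proof.
case=> hl h0; apply: functional_extensionality_dep => j.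
rewrite /scale_at /transvection /negcol /= eqxx !h0 subr0.
case: (eqVneq j k) => [->|_].
  by rewrite !h0 subr0 !addr0 scalerA mulVr // scale1r.
by rewrite !scale1r (linZ _ _ (hl j)) scaler_nat mulr2n addrA subrK.
Qed.

Lemma derived_transvection (k : 'I_s) (be : forall j, N k -> N j) h :
  transvector be -> in_derived h -> in_derived (h \o transvection be).
Proof.
move=> tb hd.
have comm2 a : GRing.comm (2%:R : A) a by rewrite /GRing.comm mulr_natl mulr_natr.
have comm2V a : GRing.comm (2%:R^-1 : A) a by apply/commr_sym/commrV/commr_sym.
have scale2_aut : is_aut_ds (scale_at (N := N) k 2%:R).
  split; first exact: scale_at_lin.
  by exists (scale_at k 2%:R^-1); apply: scale_atK; [rewrite mulVr | rewrite divrr].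
have := der_step hd scale2_aut (transvection_aut (negcol_transvector tb))
  (scale_atK k (mulVr h2)) (scale_atK k (divrr h2))
  (transvectionNK tb) (transvectionK tb).
congr in_derived; apply: functional_extensionality => x.
by rewrite /= (transvection_commutator x tb).
Qed.

Hypotheses (hloc : forall i : 'I_s, local_End (N i))
  (hnoniso : forall i j : 'I_s, i != j -> ~ iso_mod (N i) (N j)).

Lemma clear_columns (g : dsum N -> dsum N) n : is_aut_ds g -> (n <= s)%N ->
  exists h g', [/\ in_derived h, is_aut_ds g', (forall x, g x = h (g' x))
                 & columns_cleared g' n].
Proof.
move=> ga; elim: n => [_|n IH ns].
  by exists id, g; split=> //; exact: der_id.
have [h [g' [hd ga' hx hc]]] := IH (ltnW ns).
have [be [tb hc']] := clear_column hloc hnoniso (k := Ordinal ns) ga' hc.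
exists (h \o transvection (negcol be)), (transvection be \o g'); split=> //.
- exact: derived_transvection (negcol_transvector tb) hd.
- exact: aut_ds_comp (transvection_aut tb) ga'.
- by move=> x; rewrite hx /= transvectionK.
Qed.

End Commutators.

Unset Implicit Arguments.
Set Strict Implicit.

Theorem mainTheorem14 (A : unitRingType) (s : nat) (N : 'I_s -> lmodType A)
  (h2 : (2%:R : A) \is a GRing.unit)
  (hloc : forall i : 'I_s, local_End (N i))
  (hnoniso : forall i j : 'I_s, i != j -> ~ iso_mod (N i) (N j))
  (g : dsum N -> dsum N) (hg : is_aut_ds g) :
  exists phi : forall i : 'I_s, N i -> N i,
    (forall i, is_aut (phi i)) /\
    exists h : dsum N -> dsum N,
      in_derived h /\ forall x : dsum N, g x = h (Delta phi x).
Proof.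
have [h [g' [hd ga' hx hc]]] := clear_columns h2 hloc hnoniso hg (leqnn s).
exists (fun j => entry g' j j); split; first by move=> j; exact: diag_entry_aut.
have hgl : is_linear_ds g' by case: ga'.
by exists h; split=> // x; rewrite hx (cleared_is_Delta _ hgl hc).
Qed.
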